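(* Let $d\ge 1$ and let $Q=\bigcap_{i=1}^{k}\{x\in\mathbb{R}^d:\langle u_i,x\rangle\le b_i\}$ be a convex polytope whose facets have the $k$ pairwise distinct outward unit normals $u_1,\dots,u_k$. Let $P\subset\mathbb{R}^d$ be a finite set of $n\ge 1$ points. Then there exists $p\in P$ such that $p\in M$ for every homothet $M$ of $Q$ with $|M\cap P|>(1-\frac{1}{k})n$.
   Context: A homothet of $Q$ is a set of the form $\lambda Q+t=\{\lambda x+t: x\in Q\}$ with $\lambda>0$ and $t\in\mathbb{R}^d$. *)

(* points of R^d are row vectors 'rV[R]_d over an arbitrary
   real field R (the statement is purely order-algebraic). *)
From HB Require Import structures.
From mathcomp Require Import all_boot all_order all_algebra.
Set Implicit Arguments. Unset Strict Implicit. Unset Printing Implicit Defensive.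
Import Order.TTheory GRing.Theory Num.Theory.
Local Open Scope ring_scope.

Definition dotp (R : realFieldType) (d : nat) (u x : 'rV[R]_d) : R :=
  \sum_(j < d) u 0 j * x 0 j.

Definition inQ (R : realFieldType) (d k : nat) (u : 'I_k -> 'rV[R]_d)
  (b : 'I_k -> R) (x : 'rV[R]_d) : Prop :=
  forall i : 'I_k, dotp (u i) x <= b i.

Definition bounded_set (R : realFieldType) (d : nat) (S : 'rV[R]_d -> Prop) : Prop :=
  exists C : R, forall x, S x -> forall j : 'I_d, `|x 0 j| <= C.

(* F is a facet-dimensional set in R^d: it contains d affinely independent
   points x0, x0 + X_1, ..., x0 + X_{d-1} (rows of X linearly independent),
   i.e. its affine hull has dimension >= d-1. *)
Definition has_dim_ge_pred (R : realFieldType) (d : nat) (F : 'rV[R]_d -> Prop) : Prop :=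
  exists (x0 : 'rV[R]_d) (X : 'M[R]_(d.-1, d)),
    F x0 /\ (forall j : 'I_d.-1, F (row j X + x0)) /\ row_free X.

(* the i-th constraint of Q defines a facet of Q:
   F_i = Q ∩ {<u_i,x> = b_i} has affine dimension d-1
   (it lies in a hyperplane since u_i <> 0, so dimension is at most d-1). *)
Definition is_facet_constraint (R : realFieldType) (d k : nat)
  (u : 'I_k -> 'rV[R]_d) (b : 'I_k -> R) (i : 'I_k) : Prop :=
  has_dim_ge_pred (fun x => inQ u b x /\ dotp (u i) x = b i).

Definition in_homothet (R : realFieldType) (d : nat) (Q : 'rV[R]_d -> Prop)
  (lam : R) (t : 'rV[R]_d) (x : 'rV[R]_d) : Prop :=
  exists2 y, Q y & x = lam *: y + t.

(* |M ∩ P| > m, for P given as a duplicate-free list: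
   some sub-list of P of size > m lies in M *)
Definition card_inter_gt (R : realFieldType) (d : nat) (M : 'rV[R]_d -> Prop)
  (P : seq 'rV[R]_d) (m : R) : Prop :=
  exists S : seq 'rV[R]_d, subseq S P /\ (forall x, x \in S -> M x) /\ m < (size S)%:R.

From HB Require Import structures.
From mathcomp Require Import all_boot all_order all_algebra.
From mathcomp Require Import lra.
Set Implicit Arguments. Unset Strict Implicit. Unset Printing Implicit Defensive.
Import Order.TTheory GRing.Theory Num.Theory.

(* Call p a DEEP point of P (with n points) for a function f if at
   least n/k points q of P satisfy f p <= f q, i.e. k * upcount f P p >= n.

   1. For one function f, the points that are not deep number fewer than n/k:
      the one of them minimising f sees all of them above itself
      (shallow_count).
   2. A union bound over the k functionals leaves fewer than n points that are
      shallow for some functional, so some p in P is deep for all of them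
      (deep_point).
   3. If a half-space {f <= beta} contains more than (1 - 1/k) n points of P,
      it contains every point deep for f: otherwise the >= n/k points above p
      all lie outside it (deep_in_halfspace).
   4. A homothet lam Q + t of Q is the intersection of the half-spaces
      <u_i, x> <= lam b_i + <u_i, t> (in_homothetP); so the deep point p of
      step 2 lies in every homothet containing more than (1 - 1/k) n points. *)

Section DeepPoint.
Variables (disp : Order.disp_t) (R : orderType disp) (T : eqType).
Implicit Types (f : T -> R) (s S : seq T) (B : pred T).

Definition upcount f s (x : T) : nat := count (fun y => (f x <= f y)%O) s.

Lemma min_witness f B s : has B s ->
  exists2 x0, (x0 \in s) && B x0 & {in s, forall y, B y -> (f x0 <= f y)%O}.
Proof.
move=> /hasP[y ys By].
pose F (j : 'I_(size s)) := f (nth y s j).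
have yj : (index y s < size s)%N by rewrite index_mem.
case: (@arg_minP _ _ _ (Ordinal yj) (fun j => B (nth y s j)) F) => /=.
  by rewrite nth_index.
move=> j Bj minj; exists (nth y s j); first by rewrite mem_nth ?Bj.
move=> z zs Bz; have zi : (index z s < size s)%N by rewrite index_mem.
by have := minj (Ordinal zi); rewrite /F /= nth_index //; apply.
Qed.

(* Every element satisfying B lies above the B-minimiser x0, so B holds for at
   most upcount f s x0 elements of s. *)
Lemma count_le_upcount_min f B s : has B s ->
  exists2 x0, B x0 & (count B s <= upcount f s x0)%N.
Proof.
move=> /(min_witness f)[x0 /andP[_ Bx0] minx0]; exists x0 => //.
rewrite -(eq_in_count (a1 := predI B (fun y => (f x0 <= f y)%O))).
  by apply: sub_count => y /andP[].
by move=> y ys /=; case By: (B y) => //=; apply: minx0.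
Qed.

Lemma shallow_count (k n : nat) f s : (0 < n)%N ->
  (k * count (fun x => k * upcount f s x < n)%N s < n)%N.
Proof.
move=> n_gt0; set B := fun x => (k * upcount f s x < n)%N.
case: (boolP (has B s)) => [/(count_le_upcount_min f)[x0 Bx0 le_x0]|].
  by apply: leq_ltn_trans Bx0; rewrite leq_mul2l le_x0 orbT.
by rewrite has_count -leqNgt leqn0 => /eqP->; rewrite muln0.
Qed.

Lemma count_exists {k : nat} (B : 'I_k -> pred T) s :
  (count (fun x => [exists i, B i x]) s <= \sum_(i < k) count (B i) s)%N.
Proof.
elim: s => [|x s IH] /=; first by rewrite big1.
rewrite big_split /= leq_add //.
by case: existsP => [[i Bi]|] //; rewrite (bigD1 i) //= Bi.
Qed.

Lemma deep_point (k : nat) (f : 'I_k -> T -> R) s : (0 < size s)%N ->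
  exists2 p, p \in s & forall i, (size s <= k * upcount (f i) s p)%N.
Proof.
move=> s_gt0; set shallow := fun i x => (k * upcount (f i) s x < size s)%N.
set somewhere_shallow := fun x => [exists i, shallow i x].
have few_shallow : (count somewhere_shallow s < size s)%N.
  apply: leq_ltn_trans (count_exists shallow s) _.
  have [k0|k_gt0] := posnP k.
    by rewrite big1 // => i; have : (i < 0)%N by rewrite -k0.
  rewrite -(ltn_pmul2l k_gt0) big_distrr /=.
  apply: (@leq_ltn_trans (\sum_(i < k) (size s).-1)).
    by apply: leq_sum => i _; rewrite -ltnS prednK //; apply: shallow_count.
  by rewrite sum_nat_const card_ord -{2}(prednK s_gt0) ltn_pmul2l.
have /hasP[p ps /existsPn deep] : has (predC somewhere_shallow) s.
  by rewrite has_count -(ltn_add2l (count somewhere_shallow s)) addn0 count_predC.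
by exists p => // i; rewrite leqNgt; apply: deep.
Qed.

Lemma deep_in_halfspace (k : nat) f (beta : R) s S p :
  (size s <= k * upcount f s p)%N -> subseq S s ->
  (forall x, x \in S -> (f x <= beta)%O) -> (k * (size s - size S) < size s)%N ->
  (f p <= beta)%O.
Proof.
move=> deep_p sub_S S_in S_large; rewrite leNgt; apply/negP => beta_lt_p.
suff up_small : (upcount f s p <= size s - size S)%N.
  by move: (leq_trans deep_p (leq_mul (leqnn k) up_small)); rewrite leqNgt S_large.
have out_up : (upcount f s p <= count (predC (fun y => f y <= beta)%O) s)%N.
  by apply: sub_count => y /= /(lt_le_trans beta_lt_p); rewrite ltNge.
have in_S : (size S <= count (fun y => f y <= beta)%O s)%N.
  by rewrite -(count_predT S) -(eq_in_count (a1 := fun y => (f y <= beta)%O))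
    ?leq_count_subseq // => y /S_in->.
rewrite leq_subRL ?size_subseq //.
by rewrite -(count_predC (fun y => (f y <= beta)%O) s) leq_add.
Qed.
End DeepPoint.

Local Open Scope ring_scope.

Section Homothets.
Variables (R : realFieldType) (d k : nat).
Implicit Types (v x y t : 'rV[R]_d) (a : R).

Lemma dotpD v x y : dotp v (x + y) = dotp v x + dotp v y.
Proof. by rewrite /dotp -big_split; apply: eq_bigr => j _; rewrite mxE mulrDr. Qed.

Lemma dotpZ v a x : dotp v (a *: x) = a * dotp v x.
Proof. by rewrite /dotp mulr_sumr; apply: eq_bigr => j _; rewrite mxE mulrCA. Qed.

Lemma dotpN v x : dotp v (- x) = - dotp v x.
Proof. by rewrite -scaleN1r dotpZ mulN1r. Qed.

Lemma in_homothetP (u : 'I_k -> 'rV[R]_d) (b : 'I_k -> R) (lam : R) t x :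
  0 < lam ->
  in_homothet (inQ u b) lam t x <-> forall i, dotp (u i) x <= lam * b i + dotp (u i) t.
Proof.
move=> lam_gt0; split=> [[y Qy ->] i|x_in].
  by rewrite dotpD dotpZ lerD2r ler_pM2l.
exists (lam^-1 *: (x - t)); last by rewrite scalerA divff ?gt_eqF // scale1r subrK.
move=> i; rewrite dotpZ dotpD dotpN ler_pdivrMl //; have := x_in i; lra.
Qed.
End Homothets.

Lemma large_fraction_nat (R : numFieldType) (k n m : nat) : (0 < k)%N -> (m <= n)%N ->
  (1 - k%:R^-1) * n%:R < m%:R :> R -> (k * (n - m) < n)%N.
Proof.
move=> k_gt0 m_le_n; have kR : 0 < k%:R :> R by rewrite ltr0n.
rewrite -(ltr_pM2l kR) mulrA mulrBr mulr1 divff ?gt_eqF // mulrBl mul1r.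
by rewrite ltrBlDl -ltrBlDr -mulrBr -natrB // -natrM ltr_nat.
Qed.

Theorem corollary4 (R : realFieldType) (d k : nat) (hd : (1 <= d)%N)
  (u : 'I_k -> 'rV[R]_d) (b : 'I_k -> R)
  (hunit : forall i, dotp (u i) (u i) = 1)
  (hdist : injective u)
  (hbdd : bounded_set (inQ u b))
  (hfacet : forall i, is_facet_constraint u b i)
  (P : seq 'rV[R]_d) (n : nat) (huniq : uniq P) (hsize : size P = n) (hn : (1 <= n)%N) :
  exists2 p, p \in P &
    forall (lam : R) (t : 'rV[R]_d), 0 < lam ->
      card_inter_gt (in_homothet (inQ u b) lam t) P ((1 - k%:R^-1) * n%:R) ->
      in_homothet (inQ u b) lam t p.
Proof.
have P_gt0 : (0 < size P)%N by rewrite hsize.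
have [p pP deep] := deep_point (fun i => dotp (u i)) P_gt0.
exists p => // lam t lam_gt0 [S [sub_S [S_in large]]].
apply/(in_homothetP u b t _ lam_gt0) => i.
have k_gt0 : (0 < k)%N by apply: leq_ltn_trans (ltn_ord i).
apply: (deep_in_halfspace (deep i) sub_S).
  by move=> x /S_in /(in_homothetP u b t _ lam_gt0); apply.
have S_le_P : (size S <= n)%N by rewrite -hsize size_subseq.
by rewrite hsize; apply: (@large_fraction_nat R k n (size S) k_gt0 S_le_P).
Qed.
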